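(* Let $q$ be a positive integer which is not prime, with $q_0\ge 4$, and let $n$ be an integer with $2\le n\le q_0-2$. Then \[ |I_0(q,n)|\ \ge\ \frac{1}{q_0}\binom{q_0}{n}. \]
   Context: Set $q_0=(q-1)/2$ if $q$ is odd and $q_0=q/2$ if $q$ is even. Let $\widetilde I(q,n)$ be the set of $n$-tuples of integers and $\widetilde I_0(q,n)=\{(p_1,\dots,p_n)\in\widetilde I(q,n): p_i\not\equiv \pm p_j \pmod q \text{ for } 1\le i<j\le n,\ \gcd(p_1,\dots,p_n,q)=1\}$. Two tuples $(p_1,\dots,p_n)$ and $(s_1,\dots,s_n)$ are equivalent if there exist an integer $l$ coprime to $q$ and signs $e_i\in\{-1,1\}$ such that $(p_1,\dots,p_n)$ is a permutation of $(e_1ls_1,\dots,e_nls_n)$ modulo $q$. $I_0(q,n)=\widetilde I_0(q,n)/\!\sim$. *)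

From HB Require Import structures.
From mathcomp Require Import all_boot all_order all_algebra all_fingroup.
Set Implicit Arguments. Unset Strict Implicit. Unset Printing Implicit Defensive.
Import Order.TTheory GRing.Theory Num.Theory.
Local Open Scope ring_scope.

Definition q0 (q : nat) : nat := if odd q then ((q - 1) %/ 2)%N else (q %/ 2)%N.

(* Integer n-tuples are represented by their residues mod q (all the
   conditions and the equivalence relation only depend on residues mod q).
   A residue t_i : 'I_q is read as the integer (t_i : nat)%:Z. *)

Definition I0tilde (q n : nat) : {set n.-tuple 'I_q} :=
  [set t : n.-tuple 'I_q |
    [forall i : 'I_n, forall j : 'I_n, (i < j)%N ==>
       (~~ (((tnth t i : nat)%:Z == (tnth t j : nat)%:Z %[mod q%:Z])%Z)
        && ~~ (((tnth t i : nat)%:Z == - (tnth t j : nat)%:Z %[mod q%:Z])%Z))]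
    && (foldr gcdn q [seq nat_of_ord x | x <- t] == 1%N)].

Definition tequiv (q n : nat) (p s : n.-tuple 'I_q) : bool :=
  [exists l : 'I_q, coprime l q &&
    [exists sigma : 'S_n, exists e : n.-tuple bool,
      [forall i : 'I_n,
        ((tnth p i : nat)%:Z ==
           (-1) ^+ (tnth e (sigma i)) * (l : nat)%:Z * (tnth s (sigma i) : nat)%:Z
           %[mod q%:Z])%Z]]].

Definition I0 (q n : nat) : {set {set n.-tuple 'I_q}} :=
  [set [set p in I0tilde q n | tequiv p s] | s in I0tilde q n].

(* Write m = q0 q.  Since 2m <= q, the residues 1, ..., m are pairwise
   distinct up to sign modulo q.  Let D be the family of n-subsets S of
   {1, ..., m} containing 1; it has C(m-1, n-1) members.  Listed increasingly,
   such an S is an element of \tilde I_0(q,n) (the entry 1 forces the gcd to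
   be 1).  Fix a representative r of the class of S.  Then r is a signed
   permutation of l.S for a unit l, so the entry 1 of S sits at some position
   j of r with r_j = +-l.  The pair (class of S, j) determines S: every entry
   of S is +-l^-1 r_k for some k, and the sign is fixed by 1 <= s <= m.
   Hence S |-> (class, j) injects D into I_0(q,n) x {1, ..., n}, so that
   C(m-1, n-1) <= n |I_0(q,n)|, and n C(m,n) = m C(m-1,n-1) concludes. *)

From HB Require Import structures.
From mathcomp Require Import all_boot all_order all_algebra all_fingroup.
From mathcomp Require Import zify ring.
Import Order.TTheory GRing.Theory Num.Theory.
Local Open Scope ring_scope.
Set Implicit Arguments. Unset Strict Implicit.

(* The residues 1, ..., q0 q, together with their opposites, fit in Z/q. *)
Lemma q0_double (q : nat) : (q0 q + q0 q <= q)%N.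
Proof. by rewrite /q0; case: (odd q); lia. Qed.

Lemma Zp_eq_mod (p : nat) (x y : int) :
  (x == y %[mod (p.+2)%:Z])%Z -> (x%:~R : 'Z_p.+2) = y%:~R.
Proof.
rewrite eqz_mod_dvd => /dvdzP [c Hc]; apply/eqP; rewrite -subr_eq0 -rmorphB /= Hc.
rewrite intrM (_ : (p.+2)%:Z%:~R = (p.+2)%:R :> 'Z_p.+2) //.
by rewrite (pchar_Zp (isT : (1 < p.+2)%N)) mulr0.
Qed.

Lemma Zp_signed_small_eq (p a b : nat) (e : bool) :
  (1 <= a <= q0 p.+2)%N -> (1 <= b <= q0 p.+2)%N ->
  (a%:R : 'Z_p.+2) = (-1) ^+ e * b%:R -> a = b.
Proof.
move=> a_rng b_rng; have := q0_double p.+2 => m2.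
have q1 : (1 < p.+2)%N by [].
case: e; rewrite /= ?mul1r ?expr1 ?mulN1r.
  move/eqP; rewrite -subr_eq0 opprK -natrD => /eqP/(congr1 val).
  rewrite /= val_Zp_nat // => /eqP; rewrite -/(dvdn _ _) => /dvdn_leq ab_q.
  have : (p.+2 <= a + b)%N by apply: ab_q; lia.
  lia.
move/(congr1 val); rewrite /= !val_Zp_nat // !modn_small //; lia.
Qed.

Lemma signed_cancel (R : comUnitRingType) (l1 l2 x1 x2 : R) (e1 e2 b1 b2 : bool) :
  l1 \is a GRing.unit ->
  (-1) ^+ b1 * l1 = (-1) ^+ b2 * l2 ->
  (-1) ^+ e1 * l1 * x1 = (-1) ^+ e2 * l2 * x2 ->
  x1 = (-1) ^+ (e1 (+) e2 (+) b1 (+) b2) * x2.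
Proof.
move=> l1U Hl Hx.
have sq (b : bool) : (-1) ^+ b * (-1) ^+ b = 1 :> R by rewrite -signr_addb addbb.
have l2E : l2 = (-1) ^+ (b1 (+) b2) * l1.
  by rewrite signr_addb [(-1) ^+ b1 * _]mulrC -mulrA Hl mulrA sq mul1r.
apply: (mulrI l1U).
have -> : l1 * x1 = (-1) ^+ e1 * ((-1) ^+ e1 * l1 * x1) by rewrite !mulrA sq mul1r.
by rewrite Hx l2E !signr_addb; ring.
Qed.

Lemma foldr_gcdn_dvd (q : nat) (s : seq nat) (x : nat) :
  x \in s -> (foldr gcdn q s %| x)%N.
Proof.
elim: s => //= y s IH; rewrite inE => /orP[/eqP ->|/IH]; first exact: dvdn_gcdl.
exact: dvdn_trans (dvdn_gcdr _ _).
Qed.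

Lemma I0tilde_small (p n : nat) (t : n.-tuple 'I_p.+2) :
  injective (tnth t) ->
  (forall i, 1 <= tnth t i <= q0 p.+2)%N ->
  (exists i, tnth t i = 1%N :> nat) ->
  t \in I0tilde p.+2 n.
Proof.
move=> t_inj t_rng [i1 t_i1]; rewrite inE; apply/andP; split.
  apply/forallP => i; apply/forallP => j; apply/implyP => lt_ij.
  have signed_neq (e : bool) : ~ ((tnth t i : nat)%:R : 'Z_p.+2)
      = (-1) ^+ e * (tnth t j : nat)%:R.
    move/Zp_signed_small_eq => /(_ (t_rng i) (t_rng j)) /val_inj/t_inj eq_ij.
    by rewrite eq_ij ltnn in lt_ij.
  apply/andP; split; apply/negP => /Zp_eq_mod; rewrite ?rmorphN /= -!pmulrn.
    by rewrite -[X in _ = X]mul1r; exact: (signed_neq false).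
  by rewrite -mulN1r; exact: (signed_neq true).
have : (foldr gcdn p.+2 [seq nat_of_ord x | x <- t] %| 1)%N.
  by apply: foldr_gcdn_dvd; rewrite -t_i1 map_f ?mem_tnth.
by rewrite dvdn1.
Qed.

Definition scaled_perm (q n : nat) (r s : n.-tuple 'I_q) (l : 'I_q)
    (sg : 'S_n) (e : n.-tuple bool) : bool :=
  [forall i : 'I_n,
     ((tnth r i : nat)%:Z ==
        (-1) ^+ (tnth e (sg i)) * (l : nat)%:Z * (tnth s (sg i) : nat)%:Z
        %[mod q%:Z])%Z].

Lemma scaled_permZp (p n : nat) (r s : n.-tuple 'I_p.+2) l sg e :
  scaled_perm r s l sg e -> forall i, ((tnth r i : nat)%:R : 'Z_p.+2) =
     (-1) ^+ (tnth e (sg i)) * (l : nat)%:R * (tnth s (sg i) : nat)%:R.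
Proof. by move=> /forallP r_s i; move/Zp_eq_mod: (r_s i); rewrite !intrM intr_sign. Qed.

(* Position i of r is an anchor for s: some witness of r ~ s through the
   unit l has r_i = +-l, i.e. position i carries the image of an entry 1. *)
Definition anchored (q n : nat) (r s : n.-tuple 'I_q) (i : 'I_n) : bool :=
  [exists l : 'I_q, exists sg : 'S_n, exists e : n.-tuple bool, exists b : bool,
    [&& coprime l q, scaled_perm r s l sg e &
        ((tnth r i : nat)%:Z == (-1) ^+ b * (l : nat)%:Z %[mod q%:Z])%Z]].

Lemma anchored_subset (p n : nat) (r s1 s2 : n.-tuple 'I_p.+2) (i : 'I_n) :
  (forall j, 1 <= tnth s1 j <= q0 p.+2)%N ->
  (forall j, 1 <= tnth s2 j <= q0 p.+2)%N ->
  anchored r s1 i -> anchored r s2 i -> {subset s1 <= s2}.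
Proof.
move=> s1_rng s2_rng.
case/existsP=> l1 /existsP[sg1 /existsP[e1 /existsP[b1 /and3P[l1_cop r_s1 r_l1]]]].
case/existsP=> l2 /existsP[sg2 /existsP[e2 /existsP[b2 /and3P[_ r_s2 r_l2]]]].
move=> x /tnthP[a ->]; set k := (sg1^-1)%g a.
have l1U : ((l1 : nat)%:R : 'Z_p.+2) \is a GRing.unit by rewrite unitZpE // coprime_sym.
have l1_l2 : (-1) ^+ b1 * (l1 : nat)%:R = (-1) ^+ b2 * (l2 : nat)%:R :> 'Z_p.+2.
  by move: r_l1 r_l2 => /Zp_eq_mod + /Zp_eq_mod; rewrite !intrM !intr_sign => <- <-.
have s1_s2 := signed_cancel l1U l1_l2
  (etrans (esym (scaled_permZp r_s1 k)) (scaled_permZp r_s2 k)).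
rewrite permKV in s1_s2.
have -> : tnth s1 a = tnth s2 (sg2 k).
  exact/val_inj/(Zp_signed_small_eq (s1_rng a) (s2_rng _) s1_s2).
exact: mem_tnth.
Qed.

Section NormalizedSets.

Variables (p n' : nat).
Local Notation q := p.+2.
Local Notation n := n'.+1.
Local Notation m := (q0 q).
Hypothesis m_gt0 : (0 < m)%N.

Let m_lt_q : (m < q)%N.
Proof. by have := q0_double q; lia. Qed.

Definition res1 : 'I_q := inord 1.

Lemma res1E : (res1 : nat) = 1%N.
Proof. by rewrite /res1 inordK. Qed.

Definition res_range (a : nat) : {set 'I_q} := [set k : 'I_q | (a <= k <= m)%N].

Definition tail_sets : {set {set 'I_q}} :=
  [set B : {set 'I_q} | (B \subset res_range 2) && (#|B| == n')].

Definition normalized_sets : {set {set 'I_q}} := [set res1 |: B | B in tail_sets].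

Lemma normalized_setP (S : {set 'I_q}) :
  S \in normalized_sets -> [/\ S \subset res_range 1, res1 \in S & #|S| = n].
Proof.
case/imsetP => B; rewrite inE => /andP[B_sub /eqP B_card] ->.
have res1_B : res1 \notin B by apply/negP => /(subsetP B_sub); rewrite inE res1E.
split; last by rewrite cardsU1 res1_B B_card.
- apply/subsetP => k; rewrite !inE => /orP[/eqP ->|/(subsetP B_sub)].
    by rewrite res1E; lia.
  by rewrite inE; lia.
- exact: setU11.
Qed.

Lemma card_res_range (a : nat) : (m.+1 - a <= #|res_range a|)%N.
Proof.
pose f (k : 'I_(m.+1 - a)) : 'I_q := inord (k + a).
have fE (k : 'I_(m.+1 - a)) : (f k : nat) = (k + a)%N.
  by rewrite /f inordK //; have := ltn_ord k; lia.
have f_inj : injective f.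
  by move=> k1 k2 /(congr1 val); rewrite /= !fE => /addIn /val_inj.
rewrite -{1}[(m.+1 - a)%N]card_ord -(card_imset _ f_inj).
apply/subset_leq_card/subsetP => _ /imsetP[k _ ->].
by rewrite inE fE; have := ltn_ord k; lia.
Qed.

Lemma card_normalized_sets : ('C(m.-1, n') <= #|normalized_sets|)%N.
Proof.
rewrite card_in_imset.
  rewrite cards_draws; apply: leq_bin2l.
  by have := card_res_range 2; rewrite subSS subn1.
have res1_B (B : {set 'I_q}) : B \in tail_sets -> res1 \notin B.
  by rewrite inE => /andP[B_sub _]; apply/negP => /(subsetP B_sub); rewrite inE res1E.
move=> B1 B2 /res1_B B1_1 /res1_B B2_1 eqB.
by rewrite -(setU1K B1_1) eqB (setU1K B2_1).
Qed.

Definition set_tuple (S : {set 'I_q}) : n.-tuple 'I_q :=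
  insubd [tuple of nseq n res1] (enum S).

Lemma set_tupleE (S : {set 'I_q}) : #|S| = n -> val (set_tuple S) = enum S.
Proof. by move=> S_card; rewrite val_insubd -cardE S_card eqxx. Qed.

Lemma mem_set_tuple (S : {set 'I_q}) (k : 'I_q) :
  #|S| = n -> (k \in set_tuple S) = (k \in S).
Proof.
by move=> S_card; rewrite -[k \in set_tuple S]/(k \in val (set_tuple S)) set_tupleE ?mem_enum.
Qed.

Lemma set_tuple_small (S : {set 'I_q}) : S \in normalized_sets ->
  forall j, (1 <= tnth (set_tuple S) j <= m)%N.
Proof.
case/normalized_setP => S_sub _ S_card j.
have : tnth (set_tuple S) j \in S by rewrite -mem_set_tuple ?mem_tnth.
by move/(subsetP S_sub); rewrite inE.
Qed.

Lemma set_tuple_I0tilde (S : {set 'I_q}) :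
  S \in normalized_sets -> set_tuple S \in I0tilde q n.
Proof.
move=> S_norm; have [_ S_1 S_card] := normalized_setP S_norm.
apply: I0tilde_small; last 1 first.
- have : res1 \in set_tuple S by rewrite mem_set_tuple.
  by case/tnthP => i S_i; exists i; rewrite -S_i res1E.
- by apply/tuple_uniqP; rewrite set_tupleE ?enum_uniq.
- exact: set_tuple_small.
Qed.

Definition class_of (S : {set 'I_q}) : {set n.-tuple 'I_q} :=
  [set x in I0tilde q n | tequiv x (set_tuple S)].

Definition class_rep (C : {set n.-tuple 'I_q}) : n.-tuple 'I_q :=
  odflt [tuple of nseq n res1] [pick x in C].

Lemma tequiv_refl (t : n.-tuple 'I_q) : tequiv t t.
Proof.
apply/existsP; exists res1; rewrite res1E coprime1n /=.
apply/existsP; exists 1%g; apply/existsP; exists [tuple of nseq n false].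
apply/forallP => i; rewrite perm1 tnth_nseq /= expr0 !mul1r.
by rewrite eqz_mod_dvd subrr dvdz0.
Qed.

Lemma class_of_I0 (S : {set 'I_q}) : S \in normalized_sets -> class_of S \in I0 q n.
Proof.
by move=> S_norm; apply/imsetP; exists (set_tuple S); rewrite ?set_tuple_I0tilde.
Qed.

Lemma class_rep_tequiv (S : {set 'I_q}) :
  S \in normalized_sets -> tequiv (class_rep (class_of S)) (set_tuple S).
Proof.
move=> S_norm; rewrite /class_rep; case: pickP => [x|no_x].
  by rewrite inE => /andP[].
by move: (no_x (set_tuple S)); rewrite inE set_tuple_I0tilde ?tequiv_refl.
Qed.

Definition anchor (S : {set 'I_q}) : 'I_n :=
  odflt ord0 [pick i | anchored (class_rep (class_of S)) (set_tuple S) i].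

(* The entry 1 of S provides an anchor. *)
Lemma anchor_anchored (S : {set 'I_q}) : S \in normalized_sets ->
  anchored (class_rep (class_of S)) (set_tuple S) (anchor S).
Proof.
move=> S_norm; have [_ S_1 S_card] := normalized_setP S_norm.
rewrite /anchor; case: pickP => [//|no_anchor]; exfalso.
case/existsP: (class_rep_tequiv S_norm) => l /andP[l_cop /existsP[sg /existsP[e r_S]]].
have : res1 \in set_tuple S by rewrite mem_set_tuple.
case/tnthP => a S_a; move/negbT/negP: (no_anchor ((sg^-1)%g a)); apply.
apply/existsP; exists l; apply/existsP; exists sg; apply/existsP; exists e.
apply/existsP; exists (tnth e a); apply/and3P; split; [exact: l_cop | exact: r_S |].
by move/forallP: r_S => /(_ ((sg^-1)%g a)); rewrite permKV -S_a res1E mulr1.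
Qed.

Lemma code_inj : {in normalized_sets &, injective (fun S => (class_of S, anchor S))}.
Proof.
move=> S1 S2 S1_norm S2_norm eq_code.
have eq_class : class_of S1 = class_of S2 := congr1 fst eq_code.
have eq_anchor : anchor S1 = anchor S2 := congr1 snd eq_code.
have [_ _ S1_card] := normalized_setP S1_norm.
have [_ _ S2_card] := normalized_setP S2_norm.
have anchored2 := anchor_anchored S2_norm; rewrite -eq_class -eq_anchor in anchored2.
have sub12 := anchored_subset (set_tuple_small S1_norm) (set_tuple_small S2_norm)
  (anchor_anchored S1_norm) anchored2.
apply/eqP; rewrite eqEcard S1_card S2_card leqnn andbT; apply/subsetP => k.
by rewrite -(mem_set_tuple _ S1_card) -(mem_set_tuple _ S2_card) => /sub12.
Qed.

Lemma card_bound : ('C(m.-1, n') <= #|I0 q n| * n)%N.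
Proof.
apply: (leq_trans card_normalized_sets); rewrite -(card_in_imset code_inj).
rewrite -[n in (_ * n)%N]card_ord -cardsT -cardsX.
apply/subset_leq_card/subsetP => _ /imsetP[S S_norm ->].
by rewrite in_setX in_setT class_of_I0.
Qed.

End NormalizedSets.

Theorem proposition2p1p1 (q n : nat) :
  (0 < q)%N -> ~~ prime q -> (4 <= q0 q)%N ->
  (2 <= n)%N -> (n <= q0 q - 2)%N ->
  ((#|I0 q n|)%:R : rat) >= (1 / (q0 q)%:R) * ('C(q0 q, n))%:R.
Proof.
move=> _ _ m_ge4 n_ge2 _.
have q_gt1 : (1 < q)%N by have := q0_double q; lia.
case: q q_gt1 m_ge4 => [|[|p]] // _ m_ge4; case: n n_ge2 => [|n'] // _.
have m_gt0 : (0 < q0 p.+2)%N by lia.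
(* n C(m, n) = m C(m-1, n-1) <= m n |I_0(q,n)| *)
have bound : ('C(q0 p.+2, n'.+1) <= q0 p.+2 * #|I0 p.+2 n'.+1|)%N.
  rewrite -(leq_pmul2l (ltn0Sn n')) -mul_bin_diag mulnCA leq_pmul2l // mulnC.
  exact: card_bound m_gt0.
by rewrite mul1r mulrC ler_pdivrMr ?ltr0n // -natrM ler_nat mulnC.
Qed.
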